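(* Let $\mathcal{A}$ be a weakly irreducible $Z$-tensor of order $m$ and dimension $n$, written $\mathcal{A}=s\mathcal{I}-\mathcal{B}$ with $s>0$ and $\mathcal{B}$ nonnegative. Then: (1) $\mathbb{PV}_{\lambda_{\min}(\mathcal{A})}(\mathcal{A})$ is finite, i.e. $\mathcal{A}$ has finitely many eigenvectors (up to scalar) associated with $\lambda_{\min}(\mathcal{A})$; (2) $\mathbb{PV}_{\lambda_{\min}(\mathcal{A})}(\mathcal{A})$, with the quasi-Hadamard product $\circ$ described below, is an abelian group isomorphic to $\mathfrak{D}^{(0)}(\mathcal{A})$; (3) $s(\mathcal{A})=|\mathbb{PV}_{\lambda_{\min}(\mathcal{A})}(\mathcal{A})|$.
   Context: A real tensor $\mathcal{A}=(a_{i_1\cdots i_m})$ of order $m$ and dimension $n$ has real entries indexed by $[n]^m$. For $x\in\mathbb{C}^n$, $(\mathcal{A}x^{m-1})_i=\sum_{i_2,\dots,i_m}a_{ii_2\cdots i_m}x_{i_2}\cdots x_{i_m}$; $\mathcal{I}$ is the identity tensor. $\lambda$ is an eigenvalue with eigenvector $x\neq 0$ if $\mathcal{A}x^{m-1}=\lambda x^{[m-1]}$, $x^{[m-1]}=(x_i^{m-1})_i$. An H-eigenvalue is an eigenvalue with a real eigenvector; $\lambda_{\min}(\mathcal{A})$ denotes the least H-eigenvalue and $\rho(\cdot)$ the spectral radius. $\mathbb{PV}_\lambda(\mathcal{A})=\{x\in\mathbb{P}^{n-1}:\mathcal{A}x^{m-1}=\lambda x^{[m-1]}\}$. A $Z$-tensor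 is a real tensor with all off-diagonal entries nonpositive, i.e. $\mathcal{A}=s\mathcal{I}-\mathcal{B}$ with $s>0$, $\mathcal{B}\ge 0$. $\mathcal{A}$ is weakly irreducible if the directed graph on $[n]$ having an arc $i\to j$ ($j\ne i$) whenever $a_{ii_2\cdots i_m}\neq 0$ for some $(i_2,\dots,i_m)$ with $j\in\{i_2,\dots,i_m\}$ is strongly connected. For an invertible diagonal $D=\mathrm{diag}(d_1,\dots,d_n)$, $D^{-(m-1)}\mathcal{A}D$ has entries $d_{i_1}^{-(m-1)}a_{i_1\cdots i_m}d_{i_2}\cdots d_{i_m}$; $\mathfrak{D}^{(0)}(\mathcal{A})=\{D:\mathcal{A}=D^{-(m-1)}\mathcal{A}D,\ d_1=1\}$ (a group under matrix multiplication) and $s(\mathcal{A})=|\mathfrak{D}^{(0)}(\mathcal{A})|$ is the stabilizing index. Group structure: $\mathbb{PV}_{\lambda_{\min}(\mathcal{A})}(\mathcal{A})=\mathbb{PV}_{\rho(\mathcal{B})}(\mathcal{B})$, and since $\mathcal{B}$ is nonnegative weakly irreducible, it has a positive (Perron) eigenvector $v_p$ for $\rho(\mathcal{B})$, normalized with first entry $1$, and every $y$ in this eigenvariety may be represented with $y_1=1$, in which case $|y|=v_p$. Put $D_y=\mathrm{diag}(y_1/|y_1|,\dots,y_n/|y_n|)$ and $y\circ\hat y:=D_yD_{\hat y}v_p$. *)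

From HB Require Import structures.
From mathcomp Require Import all_boot all_order all_algebra.
From mathcomp Require Import complex.
From mathcomp Require Import boolp classical_sets functions cardinality reals.
Set Implicit Arguments. Unset Strict Implicit. Unset Printing Implicit Defensive.
Import Order.TTheory GRing.Theory Num.Theory.
Local Open Scope ring_scope.
Local Open Scope classical_set_scope.
Local Open Scope complex_scope.

(* Multi-indices (i_1,...,i_m) in [n]^m: position 0 of 'I_m is the index i_1. *)
Definition midx (m n : nat) := {ffun 'I_m -> 'I_n}.

Definition tensor (R : Type) (m n : nat) := {ffun midx m n -> R}.

Definition first_is m n (t : midx m n) (i : 'I_n) : bool :=
  [forall k : 'I_m, (val k == 0%N) ==> (t k == i)].

Definition id_tensor (R : nzRingType) m n : tensor R m n :=
  [ffun t : midx m n => if [forall k : 'I_m, forall l : 'I_m, t k == t l]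
                        then 1 else 0].

Definition tapply (R : rcfType) m n (A : tensor R m n) (x : 'rV[R[i]]_n)
  : 'rV[R[i]]_n :=
  \row_(i < n) \sum_(t : midx m n | first_is t i)
     ((A t)%:C * \prod_(k : 'I_m | val k != 0%N) x 0 (t k)).

Definition vpow (C : nzRingType) m n (x : 'rV[C]_n) : 'rV[C]_n :=
  \row_(i < n) (x 0 i) ^+ m.-1.

Definition is_eigenpair (R : rcfType) m n (A : tensor R m n)
  (lam : R[i]) (x : 'rV[R[i]]_n) : Prop :=
  x != 0 /\ tapply A x = lam *: vpow m x.

Definition is_eigenvalue (R : rcfType) m n (A : tensor R m n) (lam : R[i]) :=
  exists x, is_eigenpair A lam x.

Definition is_H_eigenvalue (R : rcfType) m n (A : tensor R m n) (lam : R[i]) :=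
  exists x, is_eigenpair A lam x /\ forall i, x 0 i \is Num.real.

Definition is_least_H_eigenvalue (R : rcfType) m n (A : tensor R m n)
  (lam : R[i]) :=
  is_H_eigenvalue A lam /\ forall mu, is_H_eigenvalue A mu -> lam <= mu.

Definition is_spectral_radius (R : rcfType) m n (A : tensor R m n) (r : R[i]) :=
  (exists mu, is_eigenvalue A mu /\ `|mu| = r) /\
  forall mu, is_eigenvalue A mu -> `|mu| <= r.

(* The point of P^{n-1} determined by a nonzero vector x: its class modulo
   nonzero complex scalars. *)
Definition pclass (C : fieldType) n (x : 'rV[C]_n) : set 'rV[C]_n :=
  [set y | exists c : C, c != 0 /\ y = c *: x].

Definition PV (R : rcfType) m n (A : tensor R m n) (lam : R[i])
  : set (set 'rV[R[i]]_n) :=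
  (@pclass _ n) @` [set x | is_eigenpair A lam x].

Definition tarc (R : nzRingType) m n (A : tensor R m n) : rel 'I_n :=
  fun i j => (j != i) && [exists t : midx m n,
     [&& first_is t i, A t != 0 & [exists k : 'I_m, (val k != 0%N) && (t k == j)]]].

Definition weakly_irreducible (R : nzRingType) m n (A : tensor R m n) : Prop :=
  forall i j : 'I_n, connect (tarc A) i j.

Definition tdiag_sim (R : rcfType) m n (A : tensor R m n) (D : 'M[R[i]]_n)
  : tensor R[i] m n :=
  [ffun t : midx m n => \sum_(i < n) (if first_is t i then
       (D i i) ^- m.-1 * (A t)%:C * \prod_(k : 'I_m | val k != 0%N) D (t k) (t k)
     else 0)].

Definition Dzero (R : rcfType) m n (A : tensor R m n.+1) : set 'M[R[i]]_n.+1 :=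
  [set D | [/\ is_diag_mx D, D \in unitmx, D 0 0 = 1 &
     [ffun t => (A t)%:C] = tdiag_sim A D]].

Definition Dvec (R : rcfType) n (y : 'rV[R[i]]_n) : 'M[R[i]]_n :=
  diag_mx (\row_i (y 0 i / `|y 0 i|)).

Definition qhprod (R : rcfType) n (vp y z : 'rV[R[i]]_n) : 'rV[R[i]]_n :=
  (Dvec y *m Dvec z *m vp^T)^T.

From HB Require Import structures.
From mathcomp Require Import all_boot all_order all_algebra.
From mathcomp Require Import complex.
From mathcomp Require Import boolp classical_sets functions cardinality reals.
From mathcomp Require Import lra ring.
Set Implicit Arguments. Unset Strict Implicit. Unset Printing Implicit Defensive.
Import Order.TTheory GRing.Theory Num.Theory.
Local Open Scope ring_scope.
Local Open Scope classical_set_scope.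
Local Open Scope complex_scope.

(* The eigenpairs of A for lam are those of B for s - lam,
   whence lambda_min(A) = s - rho(B) and PV_lam(A) = PV_rho(B).
   For an eigenvector y of B for rho, the triangle inequality
   |B y^(m-1)| <= B |y|^(m-1) is an equality; propagated along the arcs of the
   strongly connected digraph of A it gives |y| = c v_p and shows that the phase
   d = y / |y| is balanced: d_(i_1)^(m-1) = d_(i_2) ... d_(i_m) whenever
   a_(i_1 ... i_m) <> 0, which is exactly A = D^-(m-1) A D for D = diag d.
   Conversely every balanced d with d_1 = 1 gives the eigenvector d v_p.  Hence
   y |-> D_y is a bijection from PV onto D^(0)(A) carrying the quasi-Hadamard
   product to the matrix product.  Finally, a balanced phase with d_1 = 1 and all
   entries close to 1 is 1 (compare with an entry of maximal imaginary part), so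
   D^(0)(A) is a uniformly discrete subset of a torus, hence finite. *)

Section UnitCircle.
Variable R : rcfType.
Implicit Types (z w : R[i]) (d : R).
Local Notation Re := (@complex.Re R).
Local Notation Im := (@complex.Im R).

Lemma complex_ext z w : Re z = Re w -> Im z = Im w -> z = w.
Proof. by case: z => a b; case: w => c d /= -> ->. Qed.

Lemma ReM z w : Re (z * w) = Re z * Re w - Im z * Im w.
Proof. by case: z => a b; case: w. Qed.

Lemma ImM z w : Im (z * w) = Re z * Im w + Im z * Re w.
Proof. by case: z => a b; case: w. Qed.

Lemma Re_conj z : Re z^* = Re z. Proof. by case: z. Qed.

Lemma Im_conj z : Im z^* = - Im z. Proof. by case: z. Qed.

Definition on_circle z := Re z ^+ 2 + Im z ^+ 2 = 1.

Lemma on_circleP z : `|z| = 1 -> on_circle z.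
Proof. by move=> h; have := add_Re2_Im2 z; rewrite h expr1n => -[]. Qed.

Lemma on_circleM z w : on_circle z -> on_circle w -> on_circle (z * w).
Proof.
rewrite /on_circle ReM ImM => hz hw.
have -> : (Re z * Re w - Im z * Im w) ^+ 2 + (Re z * Im w + Im z * Re w) ^+ 2
  = (Re z ^+ 2 + Im z ^+ 2) * (Re w ^+ 2 + Im w ^+ 2) by ring.
by rewrite hz hw mulr1.
Qed.

Lemma on_circle_conj z : on_circle z -> on_circle z^*.
Proof. by rewrite /on_circle Re_conj Im_conj sqrrN. Qed.

Lemma on_circle_mulJ z : on_circle z -> z * z^* = 1.
Proof.
move=> hz; apply: complex_ext; rewrite ?ReM ?ImM Re_conj Im_conj /=.
  by rewrite -hz; ring.
by ring.
Qed.

Definition lower_cap d z := [/\ on_circle z, Im z <= 0 & 1 - Re z <= d].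

Lemma one_sub_ReM_le z w : on_circle z -> on_circle w ->
  1 - Re (z * w) <= 2 * ((1 - Re z) + (1 - Re w)).
Proof.
rewrite /on_circle ReM => hz hw.
have := sqr_ge0 (Im z - Im w); have := sqr_ge0 (Re z + Re w - 2); nra.
Qed.

Lemma lower_capM d d' z w : lower_cap d z -> lower_cap d' w ->
  d <= 1 / 4 -> d' <= 1 / 4 -> lower_cap (2 * (d + d')) (z * w).
Proof.
case=> hz iz rz [hw iw rw] d4 d'4; split; first exact: on_circleM.
  have h1 : Re z * Im w <= 0 by apply: mulr_ge0_le0 => //; lra.
  have h2 : Im z * Re w <= 0 by apply: mulr_le0_ge0 => //; lra.
  by rewrite ImM; lra.
by have := one_sub_ReM_le hz hw; lra.
Qed.

Lemma lower_cap_le d d' z : d <= d' -> lower_cap d z -> lower_cap d' z.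
Proof. by move=> le [? ? ?]; split => //; apply: le_trans le. Qed.

Lemma lower_cap1 d : 0 <= d -> lower_cap d 1.
Proof. by move=> d0; split; rewrite /on_circle //= ?expr1n ?expr0n ?addr0 // subrr. Qed.

Lemma lower_cap_eq1 d z : lower_cap d z -> d < 1 -> Im z = 0 -> z = 1.
Proof.
case=> hz _ rz d1 iz; apply: complex_ext => //=.
by move: hz; rewrite /on_circle iz; nra.
Qed.

Lemma lower_capM_eq1 d d' z w : lower_cap d z -> lower_cap d' w -> d < 1 -> d' < 1 ->
  z * w = 1 -> z = 1 /\ w = 1.
Proof.
move=> cz cw d1 d'1 zw1; case: (cz) (cw) => [_ iz rz] [_ iw rw].
have h1 : Re z * Im w <= 0 by apply: mulr_ge0_le0 => //; lra.
have h2 : Im z * Re w <= 0 by apply: mulr_le0_ge0 => //; lra.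
have := congr1 Im zw1; rewrite ImM /= => im0.
have iw0 : Im w = 0 by nra.
have iz0 : Im z = 0 by nra.
by split; [apply: lower_cap_eq1 cz d1 iz0 | apply: lower_cap_eq1 cw d'1 iw0].
Qed.

Lemma prod_lower_cap (I : Type) (r : seq I) (F : I -> R[i]) d :
  0 <= d -> (forall i, lower_cap d (F i)) -> 4 ^+ size r * d <= 1 ->
  lower_cap (4 ^+ size r * d) (\prod_(i <- r) F i).
Proof.
move=> d0 hF; elim: r => [|a r IH] /= hr; first by rewrite big_nil mul1r; apply: lower_cap1.
have d_le : d <= 4 ^+ size r * d by rewrite ler_peMl // exprn_ege1 // ler1n.
have hr' : 4 ^+ size r * d <= 1 / 4 by move: hr; rewrite exprS; lra.
rewrite big_cons; apply: lower_cap_le (lower_capM (hF a) (IH _) _ hr'); rewrite ?exprS; lra.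
Qed.

Lemma prod_lower_cap_eq1 (I : eqType) (r : seq I) (F : I -> R[i]) d :
  0 <= d -> (forall i, lower_cap d (F i)) -> 4 ^+ size r * d < 1 ->
  \prod_(i <- r) F i = 1 -> forall i, i \in r -> F i = 1.
Proof.
move=> d0 hF; elim: r => [|a r IH] //= hr; rewrite big_cons => hp i.
have d_le : d <= 4 ^+ size r * d by rewrite ler_peMl // exprn_ege1 // ler1n.
have hr' : 4 ^+ size r * d < 1 / 4 by move: hr; rewrite exprS; lra.
have q1 : 1 / 4 < 1 :> R by lra.
have [Fa1 P1] := lower_capM_eq1 (hF a) (prod_lower_cap d0 hF (ltW (lt_trans hr' q1)))
  (le_lt_trans d_le (lt_trans hr' q1)) (lt_trans hr' q1) hp.
by rewrite inE => /predU1P [->|] //; apply: IH => //; apply: lt_trans hr' q1.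
Qed.

Lemma Im_mulJ_le0 z w : on_circle z -> on_circle w -> 0 < Re z -> 0 < Re w ->
  Im z <= Im w -> Im (z * w^*) <= 0.
Proof.
rewrite /on_circle ImM Re_conj Im_conj mulrN => hz hw rz rw izw.
have [iz|iz] := lerP 0 (Im z); have [iw|iw] := lerP 0 (Im w).
- have h : Re w ^+ 2 <= Re z ^+ 2 by nra.
  have : Re w <= Re z by nra.
  nra.
- nra.
- nra.
- have h : Re z ^+ 2 <= Re w ^+ 2 by nra.
  have : Re z <= Re w by nra.
  nra.
Qed.

Lemma lower_cap_mulJ d z w : on_circle z -> on_circle w ->
  1 - Re z <= d -> 1 - Re w <= d -> d < 1 -> Im z <= Im w ->
  lower_cap (4 * d) (z * w^*).
Proof.
move=> hz hw rz rw d1 izw; split.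
- exact/on_circleM/on_circle_conj.
- by apply: Im_mulJ_le0 => //; lra.
- by have := one_sub_ReM_le hz (on_circle_conj hw); rewrite Re_conj; lra.
Qed.
End UnitCircle.

Lemma eq_prod_ler (R : numDomainType) (I : finType) (P : pred I) (a b : I -> R) :
  (forall i, P i -> 0 <= a i <= b i) -> (forall i, P i -> 0 < b i) ->
  \prod_(i | P i) a i = \prod_(i | P i) b i -> forall i, P i -> a i = b i.
Proof.
move=> hab hb heq i Pi; apply/eqP; apply: contraT => ne.
have /andP [a0 ab] := hab i Pi.
have lt_ab : a i < b i by rewrite lt_neqAle ne.
move: heq; rewrite (bigD1 i Pi) [X in _ = X](bigD1 i Pi) /=.
set X := \prod_(j | _) a j; set Y := \prod_(j | _) b j.
have XY : X <= Y by apply: ler_prod => j /andP [Pj _]; exact: hab.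
have Y0 : 0 < Y by apply: prodr_gt0 => j /andP [Pj _]; exact: hb.
have : a i * X < b i * Y by apply: le_lt_trans (ler_wpM2l a0 XY) _; rewrite ltr_pM2r.
by move=> /[swap] ->; rewrite ltxx.
Qed.

Lemma connect_closed (T : finType) (e : rel T) (S : pred T) i j :
  (forall x y, S x -> e x y -> S y) -> connect e i j -> S i -> S j.
Proof.
move=> cl /connectP [p pth ->] {j}; elim: p i pth => //= a p IH i /andP [eia pth] Si.
exact: IH pth (cl _ _ Si eia).
Qed.

Lemma pclass_refl (F : fieldType) n (x : 'rV[F]_n) : pclass x x.
Proof. by exists 1; rewrite oner_eq0 scale1r. Qed.

Lemma pclass_eq (F : fieldType) n (x y : 'rV[F]_n) : pclass x y -> pclass y = pclass x.
Proof.
case=> c [c0 ->]; apply/seteqP; split => z [d [d0 ->]].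
  by exists (d * c); rewrite mulf_neq0 // scalerA.
by exists (d / c); rewrite mulf_neq0 ?invr_eq0 // scalerA divfK.
Qed.

Section ProjectiveClasses.
Variables (R : rcfType) (n : nat).
Local Notation C := R[i].
Implicit Types (x y : 'rV[C]_n.+1) (P : set 'rV[C]_n.+1).

Definition normalize x := (x 0 0)^-1 *: x.

Lemma normalize_first x : x 0 0 != 0 -> normalize x 0 0 = 1.
Proof. by move=> x0; rewrite mxE mulVf. Qed.

Lemma pclass_normalize x : x 0 0 != 0 -> pclass x (normalize x).
Proof. by move=> x0; exists (x 0 0)^-1; rewrite invr_eq0. Qed.

Lemma normalizeZ (c : C) x : c != 0 -> normalize (c *: x) = normalize x.
Proof. by move=> c0; rewrite /normalize scalerA mxE invfM mulrAC mulVf // mul1r. Qed.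

Lemma normalize_id x : x 0 0 = 1 -> normalize x = x.
Proof. by move=> x0; rewrite /normalize x0 invr1 scale1r. Qed.

Definition Dclass P : 'M[C]_n.+1 := Dvec (normalize (xget 0 P)).

Lemma DclassE x : Dclass (pclass x) = Dvec (normalize x).
Proof.
rewrite /Dclass; have [c [c0 ->]] : pclass x (xget 0 (pclass x)).
  exact: (@xgetI _ 0 _ x (pclass_refl x)).
by rewrite normalizeZ.
Qed.

End ProjectiveClasses.

(* Tensors have order [m.+1] from here on, so the paper's exponent [m - 1] is [m]. *)
Section TensorAlgebra.
Variables (R : rcfType) (m n : nat).
Local Notation C := R[i].

Definition tail_prod (x : 'I_n -> C) (t : midx m.+1 n) : C :=
  \prod_(k : 'I_m.+1 | val k != 0%N) x (t k).

Lemma first_isE (t : midx m.+1 n) i : first_is t i = (t ord0 == i).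
Proof.
apply/forallP/eqP => [/(_ ord0) /implyP /(_ erefl) /eqP //|<- k].
by apply/implyP => /eqP k0; apply/eqP; congr (t _); apply: val_inj.
Qed.

Lemma card_tail : #|[pred k : 'I_m.+1 | val k != 0%N]| = m.
Proof.
rewrite -[m in RHS]/(m.+1.-1) -[in RHS](card_ord m.+1) -(cardC1 (ord0 : 'I_m.+1)).
by apply: eq_card => k; rewrite !inE.
Qed.

Lemma eq_tail_prod x y t : x =1 y -> tail_prod x t = tail_prod y t.
Proof. by move=> xy; apply: eq_bigr => k _; rewrite xy. Qed.

Lemma tail_prod_const x (t : midx m.+1 n) i :
  (forall k, t k = i) -> tail_prod x t = x i ^+ m.
Proof.
move=> ti; rewrite /tail_prod (eq_bigr (fun=> x i)) => [|k _]; last by rewrite ti.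
by rewrite prodr_const card_tail.
Qed.

Lemma tail_prodZ (c : C) x t : tail_prod (fun j => c * x j) t = c ^+ m * tail_prod x t.
Proof. by rewrite /tail_prod big_split /= prodr_const card_tail. Qed.

Lemma tail_prodM x y t : tail_prod (fun j => x j * y j) t = tail_prod x t * tail_prod y t.
Proof. by rewrite /tail_prod big_split. Qed.

Lemma tail_prodV x y t : tail_prod (fun j => x j / y j) t = tail_prod x t / tail_prod y t.
Proof. by rewrite /tail_prod prodf_div. Qed.

Lemma tail_prod_norm x t : tail_prod (fun j => `|x j|) t = `|tail_prod x t|.
Proof. by rewrite /tail_prod normr_prod. Qed.

Lemma tapplyE (A : tensor R m.+1 n) x i :
  tapply A x 0 i = \sum_(t : midx m.+1 n | t ord0 == i) (A t)%:C * tail_prod (x 0) t.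
Proof. by rewrite mxE; apply: eq_bigl => t; rewrite first_isE. Qed.

Lemma vpowE (x : 'rV[C]_n) i : vpow m.+1 x 0 i = x 0 i ^+ m.
Proof. by rewrite mxE. Qed.

Lemma id_tensor_const (t : midx m.+1 n) :
  id_tensor R m.+1 n t != 0 -> forall k, t k = t ord0.
Proof.
rewrite ffunE; case: ifP => [/forallP tc _ k|]; last by rewrite eqxx.
by have /forallP /(_ ord0) /eqP := tc k.
Qed.

Lemma sum_id_tensor x i :
  \sum_(t : midx m.+1 n | t ord0 == i) (id_tensor R m.+1 n t)%:C * tail_prod x t = x i ^+ m.
Proof.
pose ti : midx m.+1 n := [ffun _ => i].
rewrite (bigD1 ti) ?ffunE //= big1 ?addr0 => [|t /andP [/eqP t0 /eqP nti]].
  rewrite ifT ?mul1r; last by apply/forallP => k; apply/forallP => l; rewrite !ffunE.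
  by apply: tail_prod_const => k; rewrite ffunE.
have [->|/id_tensor_const tc] := eqVneq (id_tensor R m.+1 n t) 0; first by rewrite mul0r.
by case: nti; apply/ffunP => k; rewrite ffunE tc t0.
Qed.

Lemma tapplyZ (A : tensor R m.+1 n) (c : C) x : tapply A (c *: x) = c ^+ m *: tapply A x.
Proof.
apply/rowP => i; rewrite tapplyE [RHS]mxE tapplyE mulr_sumr; apply: eq_bigr => t _.
by rewrite (@eq_tail_prod _ (fun j => c * x 0 j)) ?tail_prodZ 1?mulrCA // => j; rewrite mxE.
Qed.

Lemma vpowZ (c : C) (x : 'rV[C]_n) : vpow m.+1 (c *: x) = c ^+ m *: vpow m.+1 x.
Proof. by apply/rowP => i; rewrite !mxE exprMn. Qed.

Lemma eigenpairZ (A : tensor R m.+1 n) lam (c : C) x :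
  is_eigenpair A lam x -> c != 0 -> is_eigenpair A lam (c *: x).
Proof.
case=> x0 xe c0; split; first by rewrite scaler_eq0 negb_or c0.
by rewrite tapplyZ vpowZ xe !scalerA mulrC.
Qed.

Variables (A B : tensor R m.+1 n) (s : R).
Hypothesis AsIB : forall t, A t = s * id_tensor R m.+1 n t - B t.

Lemma tapply_sIB x : tapply A x = s%:C *: vpow m.+1 x - tapply B x.
Proof.
apply/rowP => i.
have -> : (s%:C *: vpow m.+1 x - tapply B x) 0 i = s%:C * x 0 i ^+ m - tapply B x 0 i.
  by rewrite !mxE.
rewrite !tapplyE -(sum_id_tensor (x 0) i).
rewrite mulr_sumr -sumrB; apply: eq_bigr => t _.
by rewrite AsIB rmorphB rmorphM /= mulrBl mulrA.
Qed.

Lemma eigenpair_sIB lam x : is_eigenpair A lam x <-> is_eigenpair B (s%:C - lam) x.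
Proof.
rewrite /is_eigenpair tapply_sIB scalerBl; split => -[x0 h]; split => //.
  by rewrite -h opprB addrC subrK.
by rewrite h opprB addrC subrK.
Qed.

Lemma tarc_sIB i j : tarc A i j ->
  exists t : midx m.+1 n, exists2 k : 'I_m.+1,
    [/\ t ord0 = i, val k != 0%N & t k = j] & B t != 0.
Proof.
case/andP => ji /existsP [t /and3P [ti At /existsP [k /andP [k0 /eqP tk]]]].
exists t, k; first by split => //; apply/eqP; rewrite -first_isE.
apply: contra At => /eqP Bt; rewrite AsIB Bt subr0.
have [->|/id_tensor_const tc] := eqVneq (id_tensor R m.+1 n t) 0; first by rewrite mulr0.
by move: ji; rewrite -tk tc -first_isE ti.
Qed.

End TensorAlgebra.

Section BalancedPhases.
Variables (R : rcfType) (m n : nat) (A : tensor R m.+1 n).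
Local Notation C := R[i].
Implicit Types d e : 'I_n -> C.

Definition balanced d := forall t, A t != 0 -> d (t ord0) ^+ m = tail_prod d t.

Lemma balancedM d e : balanced d -> balanced e -> balanced (fun j => d j * e j).
Proof. by move=> bd be t At; rewrite tail_prodM exprMn bd ?be. Qed.

Lemma balancedV d e : balanced d -> balanced e -> balanced (fun j => d j / e j).
Proof. by move=> bd be t At; rewrite tail_prodV expr_div_n bd ?be. Qed.

Lemma diag_mx_row_entry d i : diag_mx (\row_j d j) i i = d i.
Proof. by rewrite !mxE eqxx mulr1n. Qed.

Lemma tdiag_sim_diagE d t :
  tdiag_sim A (diag_mx (\row_j d j)) t = (d (t ord0) ^+ m)^-1 * (A t)%:C * tail_prod d t.
Proof.
rewrite ffunE (bigD1 (t ord0)) //= first_isE eqxx [X in _ + X]big1 => [|i /negPf ti].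
  rewrite addr0 diag_mx_row_entry; congr (_ * _).
  by apply: eq_bigr => k _; apply: diag_mx_row_entry.
by rewrite first_isE eq_sym ti.
Qed.

Lemma tdiag_sim_balanced d : (forall j, d j != 0) ->
  [ffun t => (A t)%:C] = tdiag_sim A (diag_mx (\row_j d j)) <-> balanced d.
Proof.
move=> d_neq0; have dm_neq0 (t : midx m.+1 n) : d (t ord0) ^+ m != 0 by rewrite expf_neq0.
split => [/ffunP sim t At|bd].
  have AtC : (A t)%:C != 0 :> C by apply: contra At => /eqP [->].
  move: (sim t); rewrite ffunE tdiag_sim_diagE mulrAC => /(canLR (mulfK AtC)).
  by rewrite divff // => e; rewrite -[LHS]mul1r e mulrAC mulVf ?mul1r.
apply/ffunP => t; rewrite ffunE tdiag_sim_diagE.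
have [->|At] := eqVneq (A t) 0; first by rewrite mulr0 mul0r.
by rewrite -bd // mulrAC mulVf ?mul1r.
Qed.

Lemma unitmx_diag_row d : (diag_mx (\row_j d j) \in unitmx) = [forall j, d j != 0].
Proof.
rewrite unitmxE det_diag unitfE; apply/prodf_neq0/forallP => [h j|h j _].
  by have := h j isT; rewrite mxE.
by rewrite mxE.
Qed.

End BalancedPhases.

Lemma DzeroP (R : rcfType) (m n : nat) (A : tensor R m.+1 n.+1) (D : 'M[R[i]]_n.+1) :
  Dzero A D <->
  exists2 d, D = diag_mx (\row_j d j) & [/\ forall j, d j != 0, d ord0 = 1 & balanced A d].
Proof.
rewrite /Dzero /=; split => [[/diag_mxP [r ->] D_unit D00 sim] | [d -> [d_neq0 d0 bd]]].
  have rE : r = \row_j r 0 j by apply/rowP => j; rewrite mxE.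
  rewrite rE unitmx_diag_row in D_unit sim D00 *; move/forallP: D_unit => r_neq0.
  exists (r 0) => //; split => //; first by rewrite diag_mx_row_entry in D00.
  exact/(tdiag_sim_balanced _ r_neq0).
split; rewrite ?diag_mx_row_entry ?diag_mx_is_diag //.
- by rewrite unitmx_diag_row; apply/forallP.
- exact/tdiag_sim_balanced.
Qed.

Section PerronEigenvectors.
Variables (R : rcfType) (m n : nat).
Local Notation C := R[i].
Local Notation midx := (midx m.+1 n.+1).
Variables (A B : tensor R m.+1 n.+1) (s : R) (rho : C) (vp : 'rV[C]_n.+1).
Hypothesis AsIB : forall t, A t = s * id_tensor R m.+1 n.+1 t - B t.
Hypothesis B_ge0 : forall t, 0 <= B t.
Hypothesis A_irr : weakly_irreducible A.
Hypothesis vp_gt0 : forall i, 0 < vp 0 i.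
Hypothesis vp_eigen : tapply B vp = rho *: vpow m.+1 vp.
Hypothesis rho_ge0 : 0 <= rho.

Local Notation Bsum x i :=
  (\sum_(t : midx | t ord0 == i) (B t)%:C * tail_prod x t).

Lemma BC_ge0 t : 0 <= (B t)%:C.
Proof. by rewrite ler0c. Qed.

Lemma BC_neq0 t : B t != 0 -> (B t)%:C != 0 :> C.
Proof. by apply: contra => /eqP [->]. Qed.

Lemma eigen_BsumE y i : tapply B y = rho *: vpow m.+1 y -> Bsum (y 0) i = rho * y 0 i ^+ m.
Proof. by move=> ye; rewrite -tapplyE ye mxE vpowE. Qed.

Lemma rho_gt0 t : B t != 0 -> 0 < rho.
Proof.
move=> Bt; have vpt_gt0 : 0 < tail_prod (vp 0) t by apply: prodr_gt0 => k _.
have Bt_gt0 : 0 < (B t)%:C by rewrite lt_def BC_neq0 ?BC_ge0.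
have : 0 < rho * vp 0 (t ord0) ^+ m.
  rewrite -(eigen_BsumE _ vp_eigen) (bigD1 t) //= ltr_wpDr ?mulr_gt0 //.
  by apply: sumr_ge0 => u _; rewrite mulr_ge0 ?BC_ge0 // prodr_ge0 // => k _; rewrite ltW.
by rewrite pmulr_lgt0 // exprn_gt0.
Qed.

(* The eigen-equation at [i] squeezes [|Bsum y i| <= Bsum |y| i <= Bsum (c vp) i]
   into equalities. *)
Lemma eigen_dominated_eq y c i : tapply B y = rho *: vpow m.+1 y ->
  0 <= c -> (forall j, `|y 0 j| <= c * vp 0 j) -> `|y 0 i| = c * vp 0 i ->
  `|Bsum (y 0) i| = \sum_(t : midx | t ord0 == i) `|(B t)%:C * tail_prod (y 0) t| /\
  forall t : midx, t ord0 == i ->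
    (B t)%:C * tail_prod (fun j => `|y 0 j|) t = (B t)%:C * tail_prod (fun j => c * vp 0 j) t.
Proof.
move=> ye c0 y_le yi.
have sum_norm : \sum_(t : midx | t ord0 == i) `|(B t)%:C * tail_prod (y 0) t| =
    Bsum (fun j => `|y 0 j|) i.
  by apply: eq_bigr => t _; rewrite normrM ger0_norm ?BC_ge0 // tail_prod_norm.
have term_le t : (B t)%:C * tail_prod (fun j => `|y 0 j|) t <=
    (B t)%:C * tail_prod (fun j => c * vp 0 j) t.
  by rewrite ler_wpM2l ?BC_ge0 // ler_prod // => k _; rewrite normr_ge0 y_le.
have sum_vp : Bsum (fun j => c * vp 0 j) i = `|Bsum (y 0) i|.
  under eq_bigr => t _ do rewrite tail_prodZ mulrCA.
  rewrite -mulr_sumr (eigen_BsumE _ vp_eigen) (eigen_BsumE _ ye).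
  by rewrite normrM normrX yi ger0_norm // exprMn mulrCA.
have sum_eq : Bsum (fun j => `|y 0 j|) i = Bsum (fun j => c * vp 0 j) i.
  apply/le_anti; rewrite ler_sum //= sum_vp -sum_norm.
  exact: ler_norm_sum.
split; first by rewrite sum_norm sum_eq.
move=> t ti; apply/eqP; rewrite eq_sym -subr_eq0; apply/eqP; move: t ti.
by apply: psumr_eq0P => [t _|]; rewrite ?subr_ge0 ?sumrB ?sum_eq ?subrr.
Qed.

Lemma eigen_abs y : y != 0 -> tapply B y = rho *: vpow m.+1 y ->
  exists2 c, 0 < c & forall j, `|y 0 j| = c * vp 0 j.
Proof.
move=> y0 ye; pose ratio j := `|y 0 j| / vp 0 j.
have ratio_real j : ratio j \is Num.real by rewrite realM ?normr_real // realV gtr0_real.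
have [i0 _ ratio_max] := @real_arg_maxP _ _ ord0 xpredT ratio isT (fun i _ => ratio_real i).
set c := ratio i0 in ratio_max.
have y_le j : `|y 0 j| <= c * vp 0 j by rewrite -ler_pdivrMr //; exact: ratio_max.
have [j yj] : exists j, y 0 j != 0.
  apply/existsP; apply: contraNT y0; rewrite negb_exists => /forallP y0.
  by apply/eqP/rowP => j; rewrite mxE; apply/eqP; rewrite -[_ == _]negbK y0.
have c_gt0 : 0 < c.
  by apply: lt_le_trans (ratio_max j isT); rewrite divr_gt0 ?normr_gt0.
exists c => // j'; apply/eqP.
apply: (@connect_closed _ _ (fun j => `|y 0 j| == c * vp 0 j) _ _ _ (A_irr i0 j')).
  move=> x z /eqP yx /(tarc_sIB AsIB) [t [k [tx k_ne0 tk] Bt]].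
  have [_ /(_ t)] := eigen_dominated_eq ye (ltW c_gt0) y_le yx.
  rewrite tx eqxx -tk => /(_ isT) /(mulfI (BC_neq0 Bt)) tail_eq.
  apply/eqP; apply: (eq_prod_ler _ _ tail_eq) => // l _.
    by rewrite normr_ge0 y_le.
  by rewrite mulr_gt0.
by rewrite /c /ratio divfK ?(gt_eqF (vp_gt0 i0)).
Qed.

Definition phase (y : 'rV[C]_n.+1) j := y 0 j / `|y 0 j|.

Lemma Dvec_entry y j : Dvec y j j = phase y j.
Proof. exact: diag_mx_row_entry. Qed.

(* The triangle inequality at [i = t ord0] is an equality, so all the terms of
   [Bsum y i] share the phase [tau] of [rho * y_i^m]. *)
Lemma eigen_phase_tail y : y != 0 -> tapply B y = rho *: vpow m.+1 y ->
  forall t : midx, B t != 0 -> tail_prod (phase y) t = phase y (t ord0) ^+ m.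
Proof.
move=> y0 ye t Bt; set i := t ord0.
have [c c_gt0 yc] := eigen_abs y0 ye.
have y_neq0 j : `|y 0 j| != 0 by rewrite yc mulf_neq0 ?gt_eqF.
have y_le j : `|y 0 j| <= c * vp 0 j by rewrite yc.
have [tri_eq _] := eigen_dominated_eq ye (ltW c_gt0) y_le (yc i).
have [tau _ tau_terms] := normC_sum_eq tri_eq.
have tauE : tau = phase y i ^+ m.
  have : rho * y 0 i ^+ m = rho * `|y 0 i| ^+ m * tau.
    rewrite -(eigen_BsumE _ ye) -normrX -(ger0_norm rho_ge0) -normrM.
    by rewrite -(eigen_BsumE _ ye) tri_eq mulr_suml; apply: eq_bigr.
  rewrite -mulrA => /(mulfI (lt0r_neq0 (rho_gt0 Bt))) yiE.
  by rewrite /phase expr_div_n yiE mulrC mulKf // expf_neq0.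
have := tau_terms t (eqxx _); rewrite normrM ger0_norm ?BC_ge0 // -mulrA.
move=> /(mulfI (BC_neq0 Bt)) yt; rewrite tail_prodV yt -tauE tail_prod_norm mulrC mulKf //.
by rewrite -tail_prod_norm; apply/prodf_neq0 => k _.
Qed.

Lemma balanced_B d : balanced A d -> forall t, B t != 0 -> tail_prod d t = d (t ord0) ^+ m.
Proof.
move=> bd t Bt; have [id0|/id_tensor_const tc] := eqVneq (id_tensor R m.+1 n.+1 t) 0.
  by rewrite bd // AsIB id0 mulr0 sub0r oppr_eq0.
exact: tail_prod_const.
Qed.

Lemma phase_balanced y : y != 0 -> tapply B y = rho *: vpow m.+1 y -> balanced A (phase y).
Proof.
move=> y0 ye t At; have [Bt|Bt] := eqVneq (B t) 0; last by rewrite eigen_phase_tail.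
have /id_tensor_const tc : id_tensor R m.+1 n.+1 t != 0.
  by apply: contra At => /eqP id0; rewrite AsIB id0 Bt mulr0 subr0.
by rewrite (tail_prod_const _ tc).
Qed.

Definition perron_twist (d : 'I_n.+1 -> C) : 'rV[C]_n.+1 := \row_j (d j * vp 0 j).

Lemma perron_twist_eigen d : balanced A d ->
  tapply B (perron_twist d) = rho *: vpow m.+1 (perron_twist d).
Proof.
move=> bd; apply/rowP => i; rewrite tapplyE !mxE exprMn mulrCA -(eigen_BsumE _ vp_eigen).
rewrite mulr_sumr; apply: eq_bigr => t /eqP ti.
rewrite (@eq_tail_prod _ _ _ _ (fun j => d j * vp 0 j)) => [|j]; last by rewrite mxE.
have [->|Bt] := eqVneq (B t) 0; first by rewrite !(mul0r, mulr0).
by rewrite tail_prodM mulrCA balanced_B // ti.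
Qed.

Lemma perron_twist_neq0 d : d ord0 != 0 -> perron_twist d != 0.
Proof.
apply: contra => /eqP /rowP /(_ ord0) /eqP; rewrite !mxE mulf_eq0 => /orP [//|].
by rewrite gt_eqF.
Qed.

(* Equality on a nonzero entry of [B] forces every factor [e_(i_k) / w] to be
   [1] when [w] is an entry of [e] of maximal imaginary part: all these factors
   lie in a small lower cap of the circle and their product is [1]. *)
Lemma balanced_isolated e eta : 0 <= eta -> 4 ^+ m.+1 * eta < 1 ->
  balanced A e -> e ord0 = 1 -> (forall j, on_circle (e j)) ->
  (forall j, 1 - complex.Re (e j) <= eta) -> forall j, e j = 1.
Proof.
move=> eta0 eta_small be e0 e_circ e_near.
have eta1 : eta < 1.
  by apply: le_lt_trans eta_small; rewrite ler_peMl // exprn_ege1 // ler1n.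
have [i1 _ Im_max] := @real_arg_maxP _ _ ord0 xpredT (fun j => complex.Im (e j)) isT
  (fun j _ => num_real _).
set w := e i1 in Im_max.
suff e_w j : e j = w by move=> j; rewrite e_w -(e_w ord0).
apply/eqP; apply: (@connect_closed _ _ (fun j => e j == w) _ _ _ (A_irr i1 j)) => //.
move=> x z /eqP ex /(tarc_sIB AsIB) [t [k [tx k_ne0 tk] Bt]].
pose u l := e (t l) * w^*.
have u_cap l : lower_cap (4 * eta) (u l).
  exact: lower_cap_mulJ (e_circ _) (e_circ _) (e_near _) (e_near _) eta1 (Im_max _ isT).
pose tail := [pred l : 'I_m.+1 | val l != 0%N].
have u_prod : \prod_(l <- enum tail) u l = 1.
  rewrite big_enum big_split /= prodr_const card_tail -/(tail_prod e t).
  by rewrite balanced_B // tx ex -exprMn on_circle_mulJ ?expr1n //; apply: e_circ.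
have size_tail : 4 ^+ size (enum tail) * (4 * eta) < 1.
  by rewrite -cardE card_tail mulrA -exprSr.
have := prod_lower_cap_eq1 (mulr_ge0 (ler0n _ 4) eta0) u_cap size_tail u_prod.
move=> /(_ k); rewrite mem_enum => /(_ k_ne0); rewrite /u tk => ezw; apply/eqP.
by rewrite -[e z]mulr1 -(on_circle_mulJ (e_circ i1)) -/w [w * _]mulrC mulrA ezw mul1r.
Qed.

Hypothesis vp1 : vp 0 0 = 1.

Lemma balanced_norm1 d : balanced A d -> d ord0 = 1 -> forall j, `|d j| = 1.
Proof.
move=> bd d0 j; have d0_neq0 : d ord0 != 0 by rewrite d0 oner_eq0.
have [c _ tw_abs] := eigen_abs (perron_twist_neq0 d0_neq0) (perron_twist_eigen bd).
have c1 : c = 1 by have := tw_abs ord0; rewrite mxE d0 mul1r vp1 mulr1 normr1.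
have := tw_abs j; rewrite mxE c1 mul1r normrM (gtr0_norm (vp_gt0 j)) -{2}[vp 0 j]mul1r.
exact/mulIf/lt0r_neq0/vp_gt0.
Qed.

Lemma phase_perron_twist d : balanced A d -> d ord0 = 1 -> phase (perron_twist d) =1 d.
Proof.
move=> bd d0 j; rewrite /phase mxE normrM balanced_norm1 // mul1r gtr0_norm //.
by rewrite mulfK ?gt_eqF.
Qed.

Lemma balanced_separated d d' :
  balanced A d -> d ord0 = 1 -> balanced A d' -> d' ord0 = 1 ->
  (forall j, 1 - complex.Re (d j * (d' j)^*) <= (4 ^+ m.+2)^-1) -> d =1 d'.
Proof.
move=> bd d0 bd' d'0 close_conj.
have d'_neq0 j : d' j != 0 by rewrite -normr_eq0 balanced_norm1 ?oner_eq0.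
have close j : 1 - complex.Re (d j / d' j) <= (4 ^+ m.+2)^-1.
  by rewrite invc_norm balanced_norm1 // expr1n invr1 mul1r.
have eta_ge0 : 0 <= (4 ^+ m.+2)^-1 :> R by rewrite invr_ge0 exprn_ge0.
have dd'1 := balanced_isolated eta_ge0 _ (balancedV bd bd') _ _ close.
move=> j; rewrite -[d j](divfK (d'_neq0 j)) dd'1 ?mul1r //.
- by rewrite ltr_pdivrMr ?exprn_gt0 // mul1r ltr_eXn2l // ltr1n.
- by rewrite d0 d'0 divr1.
- by move=> i; apply: on_circleP; rewrite normrM normrV ?unitfE // !balanced_norm1 ?divr1.
Qed.

Local Notation eigenB := (is_eigenpair B rho).

Lemma eigen_entry_neq0 y : eigenB y -> forall j, y 0 j != 0.
Proof.
case=> y0 ye j; have [c c_gt0 yc] := eigen_abs y0 ye.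
by rewrite -normr_eq0 yc mulf_neq0 ?gt_eqF.
Qed.

Lemma eigen_normalized_twist y : eigenB y -> y 0 0 = 1 -> y = perron_twist (phase y).
Proof.
case=> y0 ye y00; have [c _ yc] := eigen_abs y0 ye.
have c1 : c = 1 by have := yc 0; rewrite y00 vp1 normr1 mulr1.
apply/rowP => j; rewrite mxE -(mul1r (vp 0 j)) -c1 -yc /phase divfK //.
by rewrite normr_eq0 (eigen_entry_neq0 (conj y0 ye)).
Qed.

Lemma Dvec_Dzero y : eigenB y -> y 0 0 = 1 -> Dzero A (Dvec y).
Proof.
move=> ey y00; apply/DzeroP; exists (phase y) => //; split.
- by move=> j; rewrite mulf_neq0 ?invr_eq0 ?normr_eq0 ?(eigen_entry_neq0 ey).
- by rewrite /phase y00 normr1 divr1.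
- by case: ey => y0 ye; apply: phase_balanced.
Qed.

Lemma Dvec_perron_twist d : balanced A d -> d ord0 = 1 ->
  Dvec (perron_twist d) = diag_mx (\row_j d j).
Proof.
move=> bd d0; congr diag_mx; apply/rowP => j.
by rewrite mxE [RHS]mxE; apply: phase_perron_twist.
Qed.

Lemma qhprod_perron_twist y z :
  qhprod vp y z = perron_twist (fun j => phase y j * phase z j).
Proof. by rewrite /qhprod /Dvec mulmx_diag mul_diag_mx; apply/rowP => j; rewrite !mxE. Qed.

Lemma PV_normalized P : PV B rho P -> exists2 y, P y & y 0 0 = 1.
Proof.
case=> y ey <-; have y00 := eigen_entry_neq0 ey 0.
by exists (normalize y); [apply: pclass_normalize | apply: normalize_first].
Qed.

Lemma Dclass_bij : set_bij (PV B rho) (Dzero A) (@Dclass R n).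
Proof.
have normalized y : eigenB y -> eigenB (normalize y) /\ normalize y 0 0 = 1.
  move=> ey; have y00 := eigen_entry_neq0 ey 0.
  by split; [apply: eigenpairZ; rewrite ?invr_eq0 | apply: normalize_first].
split.
- by move=> P [y /normalized [ey y00] <-]; rewrite DclassE; apply: Dvec_Dzero.
- move=> P Q; rewrite !inE => -[y ey <-] [z ez <-]; rewrite !DclassE => Dyz.
  have [[ey' y00] [ez' z00]] := (normalized y ey, normalized z ez).
  have phase_eq : phase (normalize y) =1 phase (normalize z).
    by move=> j; have := congr1 (fun D : 'M_n.+1 => D j j) Dyz; rewrite /= !Dvec_entry.
  rewrite -(pclass_eq (pclass_normalize (eigen_entry_neq0 ey 0))).
  rewrite -(pclass_eq (pclass_normalize (eigen_entry_neq0 ez 0))).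
  rewrite (eigen_normalized_twist ey' y00) (eigen_normalized_twist ez' z00).
  by congr (pclass (perron_twist _)); apply/funext/phase_eq.
- move=> D /DzeroP [d -> [_ d0 bd]].
  have tw00 : perron_twist d 0 0 = 1 by rewrite mxE d0 vp1 mulr1.
  exists (pclass (perron_twist d)); last by rewrite DclassE normalize_id ?Dvec_perron_twist.
  exists (perron_twist d) => //; split; last exact: perron_twist_eigen.
  by apply: perron_twist_neq0; rewrite d0 oner_eq0.
Qed.

Lemma Dclass_qhprod P Q y z :
  PV B rho P -> PV B rho Q -> P y -> Q z -> y 0 0 = 1 -> z 0 0 = 1 ->
  PV B rho (pclass (qhprod vp y z)) /\
  Dclass (pclass (qhprod vp y z)) = Dclass P *m Dclass Q.
Proof.
move=> [x ex <-] [x' ex' <-] Py Qz y00 z00.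
have [[y0 ye] [z0 ze]] : eigenB y /\ eigenB z.
  by case: Py Qz => [c [c0 ->]] [c' [c'0 ->]]; split; [apply: eigenpairZ ex c0 | apply: eigenpairZ ex' c'0].
rewrite -(pclass_eq Py) -(pclass_eq Qz) qhprod_perron_twist; set g := fun j => _.
have bg : balanced A g by apply: balancedM; apply: phase_balanced.
have g0 : g ord0 = 1 by rewrite /g /phase y00 z00 normr1 divr1 mulr1.
have tw00 : perron_twist g 0 0 = 1 by rewrite mxE g0 vp1 mulr1.
rewrite !DclassE !normalize_id //; split.
  exists (perron_twist g) => //; split; last exact: perron_twist_eigen.
  by apply: perron_twist_neq0; rewrite g0 oner_eq0.
rewrite Dvec_perron_twist // /Dvec mulmx_diag.
by congr diag_mx; apply/rowP => j; rewrite !mxE.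
Qed.

Lemma Dzero_card : (Dzero A #= PV B rho)%card.
Proof.
have [Dclass_fun Dclass_inj Dclass_surj] := Dclass_bij.
suff -> : Dzero A = @Dclass R n @` PV B rho by exact: inj_card_eq Dclass_inj.
by apply/seteqP; split; [exact: Dclass_surj | move=> D [P PVP <-]; exact: Dclass_fun].
Qed.

(* [lambda_min(A) = s - rho(B)]: [s - rho(B)] is an H-eigenvalue of [A] (with the
   eigenvector [vp]), and [|s - lam| <= rho(B)] as [s - lam] is an eigenvalue of [B]. *)
Lemma PV_least_H_eigenvalue lam :
  is_least_H_eigenvalue A lam -> is_spectral_radius B rho -> PV A lam = PV B rho.
Proof.
move=> [[x [ex _]] lam_min] [_ rho_max].
have vp_neq0 : vp != 0.
  by apply: contraTneq (vp_gt0 0) => ->; rewrite mxE ltxx.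
have lam_le : lam <= s%:C - rho.
  apply: lam_min; exists vp; split; last by move=> i; apply: gtr0_real.
  by apply/(eigenpair_sIB AsIB); rewrite subKr.
have norm_le : `|s%:C - lam| <= rho by apply: rho_max; exists x; apply/(eigenpair_sIB AsIB).
have rho_le : rho <= s%:C - lam by rewrite lerBrDr addrC -lerBrDr.
have rhoE : s%:C - lam = rho.
  by apply/le_anti; rewrite rho_le andbT -(ger0_norm (le_trans rho_ge0 rho_le)).
rewrite /PV; congr (_ @` _); apply/seteqP; split => y /=.
  by move=> /(eigenpair_sIB AsIB); rewrite rhoE.
by move=> ey; apply/(eigenpair_sIB AsIB); rewrite rhoE.
Qed.

End PerronEigenvectors.

Section SeparatedPoints.
Variable R : realType.
Local Notation Re := (@complex.Re R).
Local Notation Im := (@complex.Im R).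

Definition grid_cell (K : nat) (a : R) : 'I_(2 * K).+1 :=
  inord (Num.truncn ((a + 1) * K%:R)).

Lemma grid_cell_close K a b : -1 <= a <= 1 -> -1 <= b <= 1 ->
  grid_cell K a = grid_cell K b -> ((a - b) * K%:R) ^+ 2 < 1.
Proof.
have K_ge0 : 0 <= K%:R :> R by [].
have cell_ge0 (c : R) : -1 <= c -> 0 <= (c + 1) * K%:R by move=> c1; rewrite mulr_ge0 //; lra.
have cellE (c : R) : -1 <= c <= 1 -> (grid_cell K c : nat) = Num.truncn ((c + 1) * K%:R).
  move=> /andP [c1 c2]; rewrite /grid_cell inordK // ltnS truncn_le_nat -natr1 natrM.
  have : (c + 1) * K%:R <= 2 * K%:R by rewrite ler_wpM2r //; lra.
  lra.
move=> /[dup] /andP [a1 _] ha /[dup] /andP [b1 _] hb /(congr1 (@nat_of_ord _)).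
rewrite !cellE // => tr_eq.
have /andP [la ua] := truncn_itv (cell_ge0 _ a1).
have /andP [lb ub] := truncn_itv (cell_ge0 _ b1).
rewrite tr_eq -natr1 in la ua; rewrite -natr1 in ub.
have : -1 < (a - b) * K%:R < 1 by apply/andP; split; nra.
by case/andP => ? ?; nra.
Qed.

(* Two points of [S] in the same cell of a grid of mesh [1 / K < eta] are
   [eta]-close, hence equal. *)
Lemma separated_finite (T : finType) (S : set (T -> R[i])) (eta : R) : 0 < eta ->
  (forall x, S x -> forall j, `|x j| = 1) ->
  (forall x y, S x -> S y -> (forall j, 1 - Re (x j * (y j)^*) <= eta) -> x = y) ->
  finite_set S.
Proof.
move=> eta_gt0 S_circ S_sep; pose K := (Num.truncn eta^-1).+1.
have K_gt0 : 0 < K%:R :> R by rewrite ltr0n.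
have K_eta : 1 < K%:R * eta.
  by rewrite -ltr_pdivrMr // div1r truncnS_gt.
pose key (x : T -> R[i]) : {ffun T -> 'I_(2 * K).+1 * 'I_(2 * K).+1} :=
  [ffun j => (grid_cell K (Re (x j)), grid_cell K (Im (x j)))].
suff key_inj : {in S &, injective key}.
  by rewrite -(eq_finite_set (inj_card_eq key_inj)); exact: finite_finset.
move=> x y /set_mem Sx /set_mem Sy key_eq; apply: S_sep => // j.
have [cx cy] := (on_circleP (S_circ _ Sx j), on_circleP (S_circ _ Sy j)).
have /ffunP /(_ j) := key_eq; rewrite !ffunE => -[cRe cIm].
have range_Re z : on_circle z -> -1 <= Re z <= 1.
  by rewrite /on_circle => h; apply/andP; split; nra.
have range_Im z : on_circle z -> -1 <= Im z <= 1.
  by rewrite /on_circle => h; apply/andP; split; nra.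
have close_Re := grid_cell_close (range_Re _ cx) (range_Re _ cy) cRe.
have close_Im := grid_cell_close (range_Im _ cx) (range_Im _ cy) cIm.
move: cx cy close_Re close_Im; rewrite /on_circle ReM Re_conj Im_conj mulrN opprK !exprMn.
set a := Re (x j); set b := Im (x j); set c := Re (y j); set d := Im (y j).
move=> cx cy close_Re close_Im.
have K1 : 1 <= K%:R :> R by rewrite ler1n.
have dist : (a - c) ^+ 2 + (b - d) ^+ 2 = 2 * (1 - (a * c + b * d)) by nra.
have : (1 - (a * c + b * d)) * K%:R ^+ 2 < 1 by nra.
nra.
Qed.
End SeparatedPoints.

Lemma Dzero_finite (R : realType) (m n : nat) (A B : tensor R m.+1 n.+1) (s : R)
    (rho : R[i]) (vp : 'rV[R[i]]_n.+1) :
  (forall t, A t = s * id_tensor R m.+1 n.+1 t - B t) -> (forall t, 0 <= B t) ->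
  weakly_irreducible A -> (forall i, 0 < vp 0 i) -> tapply B vp = rho *: vpow m.+1 vp ->
  0 <= rho -> vp 0 0 = 1 -> finite_set (Dzero A).
Proof.
move=> AsIB B_ge0 A_irr vp_gt0 vp_eigen rho_ge0 vp1.
have norm1 := balanced_norm1 AsIB B_ge0 A_irr vp_gt0 vp_eigen rho_ge0 vp1.
have sep := balanced_separated AsIB B_ge0 A_irr vp_gt0 vp_eigen rho_ge0 vp1.
pose S := [set d : 'I_n.+1 -> R[i] | d ord0 = 1 /\ balanced A d].
apply: (@sub_finite_set _ _ ((fun d => diag_mx (\row_j d j)) @` S)).
  by move=> D /DzeroP [d -> [_ d0 bd]]; exists d.
apply/finite_image/(@separated_finite _ _ _ (4 ^+ m.+2)^-1).
- by rewrite invr_gt0 exprn_gt0.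
- by move=> d [d0 bd]; apply: norm1.
- by move=> d d' [d0 bd] [d'0 bd'] close; apply/funext/sep.
Qed.

Theorem lemma3p2 (R : realType) (m n : nat) (A B : tensor R m n.+1) (s : R)
    (lam rho : R[i]) (vp : 'rV[R[i]]_n.+1) :
  (2 <= m)%N ->
  0 < s ->
  (forall t, 0 <= B t) ->
  (forall t, A t = s * id_tensor R m n.+1 t - B t) ->
  weakly_irreducible A ->
  is_least_H_eigenvalue A lam ->
  is_spectral_radius B rho ->
  (forall i, 0 < vp 0 i) -> vp 0 0 = 1 -> tapply B vp = rho *: vpow m vp ->
  [/\ finite_set (PV A lam),
      (forall P, PV A lam P -> exists2 y, P y & y 0 0 = 1),
      (exists phi : set 'rV[R[i]]_n.+1 -> 'M[R[i]]_n.+1,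
         set_bij (PV A lam) (Dzero A) phi /\
         forall (P Q : set 'rV[R[i]]_n.+1) (y z : 'rV[R[i]]_n.+1),
           PV A lam P -> PV A lam Q -> P y -> Q z -> y 0 0 = 1 -> z 0 0 = 1 ->
           PV A lam (pclass (qhprod vp y z)) /\
           phi (pclass (qhprod vp y z)) = phi P *m phi Q)
    & (Dzero A #= PV A lam)%card].
Proof.
case: m A B => [//|m] A B _ _ B_ge0 AsIB A_irr lam_least rho_radius vp_gt0 vp1 vp_eigen.
have rho_ge0 : 0 <= rho by case: rho_radius => -[mu [_ <-]] _.
rewrite (PV_least_H_eigenvalue AsIB vp_gt0 vp_eigen rho_ge0 lam_least rho_radius).
have card := Dzero_card AsIB B_ge0 A_irr vp_gt0 vp_eigen rho_ge0 vp1.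
split => //.
- rewrite -(eq_finite_set card).
  exact: Dzero_finite AsIB B_ge0 A_irr vp_gt0 vp_eigen rho_ge0 vp1.
- exact: PV_normalized AsIB B_ge0 A_irr vp_gt0 vp_eigen rho_ge0.
- exists (@Dclass R n); split.
    exact: Dclass_bij AsIB B_ge0 A_irr vp_gt0 vp_eigen rho_ge0 vp1.
  exact: Dclass_qhprod AsIB B_ge0 A_irr vp_gt0 vp_eigen rho_ge0 vp1.
Qed.
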